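(* Let $a>0$ with $a\sqrt{2}<\pi/2$, and let $(T,g_c)$ be the singular torus defined below. Then the systole of $(T,g_c)$ equals $\min\{4a,\ 2\pi\cos(a\sqrt{2})\}$.
   Context: Let $\Delta\subset\mathbb{R}^2$ be the square lattice generated by $(2a,0)$ and $(0,2a)$. On $\mathbb{R}^3$ with coordinates $(x,y,z)$ consider the continuous Riemannian metric $h=dx^2+dy^2+\cos^2\!\big(\mathrm{dist}((x,y),\Delta)\big)\,dz^2$, where $\mathrm{dist}$ is the Euclidean distance in $\mathbb{R}^2$ (the assumption $a\sqrt2<\pi/2$ guarantees this distance is $<\pi/2$, so the coefficient is positive). The length of a piecewise smooth curve $\gamma$ is $\int (h(\gamma',\gamma'))^{1/2}dt$. $(T,g_c)$ is the quotient of $(\mathbb{R}^3,h)$ by the group generated by the translations $(x,y,z)\mapsto(x+4a,y,z)$, $(x,y,z)\mapsto(x,y+4a,z)$, $(x,y,z)\mapsto(x,y,z+2\pi)$; $h$ is invariant under these and descends to a metric $g_c$. The systole is the infimum of the lengths of non-contractible piecewise smooth closed curves in $(T,g_c)$. *)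

From Stdlib Require Import Reals ZArith Lra.
From Coquelicot Require Import Coquelicot.
Open Scope R_scope.

Definition lattice_dist (a x y : R) : R :=
  real (Glb_Rbar (fun d => exists m n : Z,
          d = sqrt ((x - 2 * a * IZR m) ^ 2 + (y - 2 * a * IZR n) ^ 2))).

Definition h_norm (a x y vx vy vz : R) : R :=
  sqrt (vx ^ 2 + vy ^ 2 + (cos (lattice_dist a x y)) ^ 2 * vz ^ 2).

Definition smooth (f : R -> R) : Prop :=
  forall (k : nat) (t : R), ex_derive (Derive_n f k) t.

(** A curve [0,1] -> R^3 (a lift of a curve in T), together with
    a partition 0 = t_0 < ... < t_n = 1 and smooth pieces. *)
Record curve3 := {
  cx : R -> R; cy : R -> R; cz : R -> R;
  npieces : nat;
  part : nat -> R;
  px : nat -> R -> R; py : nat -> R -> R; pz : nat -> R -> R }.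

Definition piecewise_smooth (c : curve3) : Prop :=
  part c 0 = 0 /\ part c (npieces c) = 1 /\
  (forall k, (k < npieces c)%nat -> part c k < part c (S k)) /\
  (forall k, (k < npieces c)%nat ->
     smooth (px c k) /\ smooth (py c k) /\ smooth (pz c k)) /\
  (forall k t, (k < npieces c)%nat -> part c k <= t <= part c (S k) ->
     cx c t = px c k t /\ cy c t = py c k t /\ cz c t = pz c k t).

Fixpoint lsum (F : nat -> R) (n : nat) : R :=
  match n with O => 0 | S m => lsum F m + F m end.

Definition h_length (a : R) (c : curve3) : R :=
  lsum (fun k => RInt (fun t => h_norm a (px c k t) (py c k t)
                          (Derive (px c k) t) (Derive (py c k) t)
                          (Derive (pz c k) t))
                      (part c k) (part c (S k)))
       (npieces c).

(** The projection of the curve to T = R^3 / <4a e1, 4a e2, 2pi e3> is closed *)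
Definition closed_in_T (a : R) (c : curve3) : Prop :=
  exists m n k : Z,
    cx c 1 - cx c 0 = 4 * a * IZR m /\
    cy c 1 - cy c 0 = 4 * a * IZR n /\
    cz c 1 - cz c 0 = 2 * PI * IZR k.

(** T is identified (homeomorphically) with S^1 x S^1 x S^1, S^1 the unit
    circle in R^2, via (x,y,z) |-> (circ (4a) x, circ (4a) y, circ (2pi) z). *)
Definition circ (L x : R) : R * R := (cos (2 * PI * x / L), sin (2 * PI * x / L)).

Definition on_circle (p : R * R) : Prop := (fst p) ^ 2 + (snd p) ^ 2 = 1.

Definition in_sq (p : R * R) : Prop := 0 <= fst p <= 1 /\ 0 <= snd p <= 1.

Definition cont_on_sq (u : R * R -> R * R) : Prop :=
  forall p, in_sq p -> filterlim u (within in_sq (locally p)) (locally (u p)).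

(** The closed curve in T is contractible: freely homotopic, through closed
    curves in T, to a constant curve. *)
Definition contractible_in_T (a : R) (c : curve3) : Prop :=
  exists u1 u2 u3 : R * R -> R * R,
    cont_on_sq u1 /\ cont_on_sq u2 /\ cont_on_sq u3 /\
    (forall p, in_sq p -> on_circle (u1 p) /\ on_circle (u2 p) /\ on_circle (u3 p)) /\
    (forall t, 0 <= t <= 1 ->
       u1 (t, 0) = circ (4 * a) (cx c t) /\
       u2 (t, 0) = circ (4 * a) (cy c t) /\
       u3 (t, 0) = circ (2 * PI) (cz c t)) /\
    (exists q1 q2 q3, forall t, 0 <= t <= 1 ->
       u1 (t, 1) = q1 /\ u2 (t, 1) = q2 /\ u3 (t, 1) = q3) /\
    (forall s, 0 <= s <= 1 ->
       u1 (0, s) = u1 (1, s) /\ u2 (0, s) = u2 (1, s) /\ u3 (0, s) = u3 (1, s)).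

Definition systole (a : R) : Rbar :=
  Glb_Rbar (fun L => exists c : curve3,
    piecewise_smooth c /\ closed_in_T a c /\ ~ contractible_in_T a c /\
    L = h_length a c).

(* Since dist((x,y), Delta) <= a sqrt 2 < pi/2, the metric h dominates both
   dx^2 + dy^2 and cos^2(a sqrt 2) dz^2, so a curve whose lift to R^3 moves by
   (4am, 4an, 2pi k) has length at least 4a |m|, 4a |n| and
   2pi cos(a sqrt 2) |k|.  If m = n = k = 0 the straight-line homotopy of the
   lift contracts the curve, so a non-contractible closed curve has length at
   least min(4a, 2pi cos(a sqrt 2)).  Both values are attained: by a
   horizontal segment of length 4a, and by a vertical segment over the centre
   (a, a) of a lattice square, where the distance to Delta is exactly a sqrt 2.
   These two curves are not contractible because one of their circle
   coordinates winds once; this is detected by summing small angle increments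
   along a fine grid sampling a homotopy, a sum that cannot jump. *)

From Stdlib Require Import Reals Lra Lia ZArith.
From Coquelicot Require Import Coquelicot.
Open Scope R_scope.

(** * The distance to the lattice *)

Definition lattice_dists (a x y : R) : R -> Prop := fun d => exists m n : Z,
  d = sqrt ((x - 2 * a * IZR m) ^ 2 + (y - 2 * a * IZR n) ^ 2).

Lemma lattice_dist_glb a x y :
  (forall d, lattice_dists a x y d -> lattice_dist a x y <= d) /\
  (forall b, (forall d, lattice_dists a x y d -> b <= d) -> b <= lattice_dist a x y).
Proof.
  unfold lattice_dist. fold (lattice_dists a x y).
  destruct (Glb_Rbar_correct (lattice_dists a x y)) as [Hlb Hglb].
  destruct (Glb_Rbar (lattice_dists a x y)) as [r| |]; simpl.
  - split.
    + intros d Hd. exact (Hlb d Hd).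
    + intros b Hb. apply (Hglb (Finite b)). intros d Hd. now apply Hb.
  - exfalso. apply (Hlb (sqrt ((x - 2 * a * IZR 0) ^ 2 + (y - 2 * a * IZR 0) ^ 2))).
    now exists 0%Z, 0%Z.
  - exfalso. apply (Hglb (Finite 0)).
    intros d [m [n ->]]. apply sqrt_pos.
Qed.

Lemma lattice_dist_le a x y m n :
  lattice_dist a x y <= sqrt ((x - 2 * a * IZR m) ^ 2 + (y - 2 * a * IZR n) ^ 2).
Proof. apply (proj1 (lattice_dist_glb a x y)). now exists m, n. Qed.

Lemma lattice_dist_nonneg a x y : 0 <= lattice_dist a x y.
Proof. apply (proj2 (lattice_dist_glb a x y)). intros d [m [n ->]]. apply sqrt_pos. Qed.

Lemma exists_near_even_multiple a x : 0 < a -> exists m : Z, Rabs (x - 2 * a * IZR m) <= a.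
Proof.
  intros ha. exists (up (x / (2 * a) - 1 / 2)).
  destruct (archimed (x / (2 * a) - 1 / 2)) as [Hup1 Hup2].
  assert (Ex : x = 2 * a * (x / (2 * a))) by (field; lra).
  apply Rabs_le. rewrite Ex at 1 3. split; nra.
Qed.

Lemma sqrt_sq_mul2 a : 0 <= a -> sqrt (a ^ 2 * 2) = a * sqrt 2.
Proof. intros ha. now rewrite sqrt_mult, sqrt_pow2 by nra. Qed.

Lemma lattice_dist_le_half_diagonal a x y : 0 < a -> lattice_dist a x y <= a * sqrt 2.
Proof.
  intros ha.
  destruct (exists_near_even_multiple a x ha) as [m Hm].
  destruct (exists_near_even_multiple a y ha) as [n Hn].
  eapply Rle_trans; [apply (lattice_dist_le a x y m n)|].
  rewrite <- sqrt_sq_mul2 by lra. apply sqrt_le_1_alt.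
  rewrite <- (pow2_abs (x - _)), <- (pow2_abs (y - _)).
  pose proof (Rabs_pos (x - 2 * a * IZR m)). pose proof (Rabs_pos (y - 2 * a * IZR n)).
  nra.
Qed.

Lemma lattice_dist_center a : 0 < a -> lattice_dist a a a = a * sqrt 2.
Proof.
  intros ha. apply Rle_antisym; [now apply lattice_dist_le_half_diagonal|].
  apply (proj2 (lattice_dist_glb a a a)). intros d [m [n ->]].
  rewrite <- sqrt_sq_mul2 by lra. apply sqrt_le_1_alt.
  assert (Hk : forall k : Z, a ^ 2 <= (a - 2 * a * IZR k) ^ 2).
  { intro k. destruct (Z.le_gt_cases k 0) as [Hk|Hk].
    - apply IZR_le in Hk. nra.
    - apply Zlt_le_succ, IZR_le in Hk. simpl in Hk. nra. }
  pose proof (Hk m). pose proof (Hk n). lra.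
Qed.

Lemma norm2_lipschitz A B A' B' :
  sqrt (A ^ 2 + B ^ 2) <= sqrt (A' ^ 2 + B' ^ 2) + Rabs (A - A') + Rabs (B - B').
Proof.
  set (r := sqrt (A' ^ 2 + B' ^ 2)).
  assert (Hr : 0 <= r) by apply sqrt_pos.
  assert (Hr2 : r * r = A' ^ 2 + B' ^ 2) by (apply sqrt_sqrt; nra).
  assert (HA : Rabs A' <= r).
  { rewrite <- (sqrt_pow2 (Rabs A')) by apply Rabs_pos.
    apply sqrt_le_1_alt. rewrite pow2_abs. nra. }
  assert (HB : Rabs B' <= r).
  { rewrite <- (sqrt_pow2 (Rabs B')) by apply Rabs_pos.
    apply sqrt_le_1_alt. rewrite pow2_abs. nra. }
  assert (Hsq : forall u u', u ^ 2 <= u' ^ 2 + 2 * Rabs u' * Rabs (u - u') + Rabs (u - u') ^ 2).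
  { intros u u'. rewrite pow2_abs.
    assert (u' * (u - u') <= Rabs u' * Rabs (u - u'))
      by (rewrite <- Rabs_mult; apply Rle_abs).
    nra. }
  pose proof (Hsq A A'). pose proof (Hsq B B').
  pose proof (Rabs_pos (A - A')). pose proof (Rabs_pos (B - B')).
  rewrite <- (sqrt_pow2 (r + Rabs (A - A') + Rabs (B - B'))) by lra.
  apply sqrt_le_1_alt. nra.
Qed.

Lemma lattice_dist_lipschitz a x y x' y' :
  lattice_dist a x y <= lattice_dist a x' y' + Rabs (x - x') + Rabs (y - y').
Proof.
  enough (lattice_dist a x y - Rabs (x - x') - Rabs (y - y') <= lattice_dist a x' y') by lra.
  apply (proj2 (lattice_dist_glb a x' y')). intros d [m [n ->]].
  pose proof (lattice_dist_le a x y m n).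
  pose proof (norm2_lipschitz (x - 2 * a * IZR m) (y - 2 * a * IZR n)
                              (x' - 2 * a * IZR m) (y' - 2 * a * IZR n)) as Hlip.
  replace (x - 2 * a * IZR m - (x' - 2 * a * IZR m)) with (x - x') in Hlip by ring.
  replace (y - 2 * a * IZR n - (y' - 2 * a * IZR n)) with (y - y') in Hlip by ring.
  lra.
Qed.

Lemma lattice_dist_continuous a (X Y : R -> R) t : continuous X t -> continuous Y t ->
  continuous (fun s => lattice_dist a (X s) (Y s)) t.
Proof.
  intros HX HY. apply filterlim_locally. intros eps.
  assert (Heps : 0 < eps / 2) by (pose proof (cond_pos eps); lra).
  pose proof (proj1 (filterlim_locally _ _) HX (mkposreal _ Heps)) as HXt.
  pose proof (proj1 (filterlim_locally _ _) HY (mkposreal _ Heps)) as HYt.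
  generalize (filter_and _ _ HXt HYt). apply filter_imp. intros s [HXs HYs].
  change (Rabs (X s - X t) < eps / 2) in HXs. change (Rabs (Y s - Y t) < eps / 2) in HYs.
  change (Rabs (lattice_dist a (X s) (Y s) - lattice_dist a (X t) (Y t)) < eps).
  pose proof (lattice_dist_lipschitz a (X s) (Y s) (X t) (Y t)).
  pose proof (lattice_dist_lipschitz a (X t) (Y t) (X s) (Y s)).
  rewrite (Rabs_minus_sym (X t)), (Rabs_minus_sym (Y t)) in *.
  apply Rabs_def1; lra.
Qed.

Lemma cos_lattice_dist_ge a x y : 0 < a -> a * sqrt 2 < PI / 2 ->
  0 < cos (a * sqrt 2) <= cos (lattice_dist a x y).
Proof.
  intros ha ha2.
  pose proof (lattice_dist_nonneg a x y). pose proof (lattice_dist_le_half_diagonal a x y ha).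
  pose proof PI_RGT_0. pose proof (sqrt_pos 2).
  split; [apply cos_gt_0; nra|].
  destruct (Req_dec (lattice_dist a x y) (a * sqrt 2)) as [<-|Hne]; [lra|].
  left. apply cos_decreasing_1; lra.
Qed.

(** * Lengths dominate coordinate displacements *)

Lemma continuous_plus_R (f g : R -> R) x :
  continuous f x -> continuous g x -> continuous (fun y => f y + g y) x.
Proof. intros. now apply (continuous_plus f g x). Qed.

Lemma continuous_mult_R (f g : R -> R) x :
  continuous f x -> continuous g x -> continuous (fun y => f y * g y) x.
Proof. intros. now apply (continuous_mult f g x). Qed.

Lemma continuous_pow2_R (f : R -> R) x : continuous f x -> continuous (fun y => f y ^ 2) x.
Proof.
  intros. apply (continuous_ext (fun y => f y * f y)); [intro; simpl; ring|].
  now apply continuous_mult_R.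
Qed.

Lemma smooth_continuous f t : smooth f -> continuous f t.
Proof. intros Hf. exact (ex_derive_continuous f t (Hf 0%nat t)). Qed.

Lemma smooth_Derive_continuous f t : smooth f -> continuous (Derive f) t.
Proof. intros Hf. exact (ex_derive_continuous (Derive f) t (Hf 1%nat t)). Qed.

Definition speed a (X Y Z : R -> R) (t : R) : R :=
  h_norm a (X t) (Y t) (Derive X t) (Derive Y t) (Derive Z t).

Lemma speed_continuous a X Y Z t : smooth X -> smooth Y -> smooth Z ->
  continuous (speed a X Y Z) t.
Proof.
  intros HX HY HZ. unfold speed, h_norm. apply continuous_sqrt_comp.
  assert (HdX := smooth_Derive_continuous X t HX).
  assert (HdY := smooth_Derive_continuous Y t HY).
  assert (HdZ := smooth_Derive_continuous Z t HZ).
  assert (Hd := lattice_dist_continuous a X Y t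
                  (smooth_continuous X t HX) (smooth_continuous Y t HY)).
  repeat apply continuous_plus_R; [| |apply continuous_mult_R];
    apply continuous_pow2_R; auto.
  now apply continuous_cos_comp.
Qed.

Lemma sqrt_ge_of_sq w A : w ^ 2 <= A -> w <= sqrt A.
Proof.
  intros H. destruct (Rle_dec w 0); [pose proof (sqrt_pos A); lra|].
  rewrite <- (sqrt_pow2 w) by lra. now apply sqrt_le_1_alt.
Qed.

Lemma h_norm_ge_x a x y vx vy vz : Rabs vx <= h_norm a x y vx vy vz.
Proof.
  apply sqrt_ge_of_sq. rewrite pow2_abs.
  pose proof (pow2_ge_0 vy). pose proof (pow2_ge_0 (cos (lattice_dist a x y))).
  pose proof (pow2_ge_0 vz). nra.
Qed.

Lemma h_norm_ge_y a x y vx vy vz : Rabs vy <= h_norm a x y vx vy vz.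
Proof.
  apply sqrt_ge_of_sq. rewrite pow2_abs.
  pose proof (pow2_ge_0 vx). pose proof (pow2_ge_0 (cos (lattice_dist a x y))).
  pose proof (pow2_ge_0 vz). nra.
Qed.

Lemma h_norm_ge_z a x y vx vy vz : 0 < a -> a * sqrt 2 < PI / 2 ->
  cos (a * sqrt 2) * Rabs vz <= h_norm a x y vx vy vz.
Proof.
  intros ha ha2. apply sqrt_ge_of_sq.
  destruct (cos_lattice_dist_ge a x y ha ha2) as [Hc0 Hc].
  assert (cos (a * sqrt 2) ^ 2 <= cos (lattice_dist a x y) ^ 2) by (apply pow_incr; lra).
  rewrite Rpow_mult_distr, pow2_abs.
  pose proof (pow2_ge_0 vx). pose proof (pow2_ge_0 vy). pose proof (pow2_ge_0 vz). nra.
Qed.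

Lemma abs_scaled_increment_le_RInt (I F : R -> R) C l r : l <= r ->
  (forall t, continuous I t) -> smooth F ->
  (forall t, Rabs (C * Derive F t) <= I t) -> Rabs (C * (F r - F l)) <= RInt I l r.
Proof.
  intros Hlr HI HF Hb.
  assert (HCF : forall t, continuous (fun t => C * Derive F t) t).
  { intro. apply continuous_mult_R; [apply continuous_const|now apply smooth_Derive_continuous]. }
  assert (HFTC : RInt (fun t => C * Derive F t) l r = C * (F r - F l)).
  { transitivity (C * RInt (Derive F) l r).
    { apply (RInt_scal (Derive F) l r C).
      apply ex_RInt_continuous. intros. now apply smooth_Derive_continuous. }
    rewrite RInt_Derive; [reflexivity| |]; intros.
    - exact (HF 0%nat x).
    - now apply smooth_Derive_continuous. }
  rewrite <- HFTC.
  eapply Rle_trans.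
  { apply abs_RInt_le; [exact Hlr|].
    now apply (ex_RInt_continuous (V := R_CompleteNormedModule)). }
  apply RInt_le; auto.
  - apply (ex_RInt_continuous (V := R_CompleteNormedModule)). intros.
    apply continuous_comp; [apply HCF|apply continuous_Rabs].
  - now apply (ex_RInt_continuous (V := R_CompleteNormedModule)).
Qed.

Lemma abs_scaled_displacement_le_length a c C (P : nat -> R -> R) (G : R -> R) :
  piecewise_smooth c ->
  (forall k, (k < npieces c)%nat -> smooth (P k)) ->
  (forall k t, (k < npieces c)%nat -> part c k <= t <= part c (S k) -> G t = P k t) ->
  (forall k t, (k < npieces c)%nat ->
     Rabs (C * Derive (P k) t) <= speed a (px c k) (py c k) (pz c k) t) ->
  Rabs (C * (G 1 - G 0)) <= h_length a c.
Proof.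
  intros [Hp0 [Hp1 [Hinc [Hsm Hagree]]]] HP HG Hb.
  assert (Hind : forall j, (j <= npieces c)%nat ->
     Rabs (C * (G (part c j) - G (part c 0%nat))) <=
     lsum (fun k => RInt (speed a (px c k) (py c k) (pz c k)) (part c k) (part c (S k))) j).
  { induction j as [|j IH]; intros Hj; simpl.
    - rewrite Rminus_diag, Rmult_0_r, Rabs_R0. lra.
    - destruct (Hsm j ltac:(lia)) as [HX [HY HZ]].
      pose proof (Hinc j ltac:(lia)) as Hlt.
      pose proof (abs_scaled_increment_le_RInt (speed a (px c j) (py c j) (pz c j)) (P j) C
        (part c j) (part c (S j)) ltac:(lra) (fun t => speed_continuous a _ _ _ t HX HY HZ)
        (HP j ltac:(lia)) (fun t => Hb j t ltac:(lia))) as Hpiece.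
      rewrite <- (HG j (part c j)), <- (HG j (part c (S j))) in Hpiece by (lia || lra).
      replace (C * (G (part c (S j)) - G (part c 0%nat))) with
        (C * (G (part c j) - G (part c 0%nat)) + C * (G (part c (S j)) - G (part c j))) by ring.
      eapply Rle_trans; [apply Rabs_triang|].
      specialize (IH ltac:(lia)). unfold h_length, speed in *. lra. }
  specialize (Hind (npieces c) (le_n _)). rewrite Hp1, Hp0 in Hind. exact Hind.
Qed.

Lemma displacement_x_le_length a c : piecewise_smooth c ->
  Rabs (cx c 1 - cx c 0) <= h_length a c.
Proof.
  intros Hc. rewrite <- (Rmult_1_l (_ - _)). pose proof Hc as [_ [_ [_ [Hsm Hagree]]]].
  apply abs_scaled_displacement_le_length with (P := px c); auto.
  - intros k Hk. apply (Hsm k Hk).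
  - intros k t Hk Ht. apply (Hagree k t Hk Ht).
  - intros k t _. rewrite Rmult_1_l. apply h_norm_ge_x.
Qed.

Lemma displacement_y_le_length a c : piecewise_smooth c ->
  Rabs (cy c 1 - cy c 0) <= h_length a c.
Proof.
  intros Hc. rewrite <- (Rmult_1_l (_ - _)). pose proof Hc as [_ [_ [_ [Hsm Hagree]]]].
  apply abs_scaled_displacement_le_length with (P := py c); auto.
  - intros k Hk. apply (Hsm k Hk).
  - intros k t Hk Ht. apply (Hagree k t Hk Ht).
  - intros k t _. rewrite Rmult_1_l. apply h_norm_ge_y.
Qed.

Lemma displacement_z_le_length a c : 0 < a -> a * sqrt 2 < PI / 2 -> piecewise_smooth c ->
  cos (a * sqrt 2) * Rabs (cz c 1 - cz c 0) <= h_length a c.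
Proof.
  intros ha ha2 Hc. pose proof Hc as [_ [_ [_ [Hsm Hagree]]]].
  destruct (cos_lattice_dist_ge a 0 0 ha ha2) as [Hcos _].
  rewrite <- (Rabs_pos_eq (cos (a * sqrt 2))) at 1 by lra. rewrite <- Rabs_mult.
  apply abs_scaled_displacement_le_length with (P := pz c); auto.
  - intros k Hk. apply (Hsm k Hk).
  - intros k t Hk Ht. apply (Hagree k t Hk Ht).
  - intros k t _. rewrite Rabs_mult, Rabs_pos_eq by lra. now apply h_norm_ge_z.
Qed.

(** * Curves with closed lifts are contractible *)

Definition cont_on_interval (f : R -> R) (l r : R) : Prop :=
  forall t, l <= t <= r -> forall eps, 0 < eps -> exists del, 0 < del /\
    forall t', l <= t' <= r -> Rabs (t' - t) < del -> Rabs (f t' - f t) < eps.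

Lemma continuous_eps_delta (g : R -> R) t : continuous g t -> forall eps, 0 < eps ->
  exists del, 0 < del /\ forall t', Rabs (t' - t) < del -> Rabs (g t' - g t) < eps.
Proof.
  intros Hg eps Heps.
  destruct (proj1 (filterlim_locally _ _) Hg (mkposreal eps Heps)) as [d Hd].
  exists d. split; [apply cond_pos|]. intros t' Ht'. exact (Hd t' Ht').
Qed.

Lemma cont_on_interval_glue f l m r :
  cont_on_interval f l m -> cont_on_interval f m r -> l <= m <= r -> cont_on_interval f l r.
Proof.
  intros Hl Hr Hm t Ht eps Heps.
  destruct (Rlt_le_dec t m) as [Htm|Hmt]; [|destruct (Rle_lt_or_eq_dec m t Hmt) as [Hmt'|<-]].
  - destruct (Hl t ltac:(lra) eps Heps) as [d [Hd Hcont]].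
    exists (Rmin d (m - t)). split; [apply Rmin_pos; lra|].
    intros t' Ht' Hdt. pose proof (Rmin_l d (m - t)). pose proof (Rmin_r d (m - t)).
    apply Rabs_def2 in Hdt. apply Hcont; [lra|apply Rabs_def1; lra].
  - destruct (Hr t ltac:(lra) eps Heps) as [d [Hd Hcont]].
    exists (Rmin d (t - m)). split; [apply Rmin_pos; lra|].
    intros t' Ht' Hdt. pose proof (Rmin_l d (t - m)). pose proof (Rmin_r d (t - m)).
    apply Rabs_def2 in Hdt. apply Hcont; [lra|apply Rabs_def1; lra].
  - destruct (Hl m ltac:(lra) eps Heps) as [d1 [Hd1 Hcont1]].
    destruct (Hr m ltac:(lra) eps Heps) as [d2 [Hd2 Hcont2]].
    exists (Rmin d1 d2). split; [apply Rmin_pos; lra|].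
    intros t' Ht' Hdt. pose proof (Rmin_l d1 d2). pose proof (Rmin_r d1 d2).
    destruct (Rle_dec t' m); [apply Hcont1|apply Hcont2]; lra.
Qed.

Lemma cont_on_interval_piecewise (G : R -> R) (P : nat -> R -> R) n (part : nat -> R) :
  (forall k, (k < n)%nat -> part k < part (S k)) ->
  (forall k t, (k < n)%nat -> continuous (P k) t) ->
  (forall k t, (k < n)%nat -> part k <= t <= part (S k) -> G t = P k t) ->
  cont_on_interval G (part 0%nat) (part n).
Proof.
  intros Hinc HP HG.
  enough (Hj : forall j, (j <= n)%nat ->
            cont_on_interval G (part 0%nat) (part j) /\ part 0%nat <= part j) by apply Hj, le_n.
  induction j as [|j IH]; intros Hj.
  - split; [|lra]. intros t Ht eps Heps. exists 1. split; [lra|].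
    intros t' Ht' _. replace t' with t by lra. rewrite Rminus_diag, Rabs_R0. lra.
  - destruct (IH ltac:(lia)) as [Hcont Hle]. pose proof (Hinc j ltac:(lia)).
    split; [|lra].
    apply cont_on_interval_glue with (part j); [exact Hcont| |lra].
    intros t Ht eps Heps.
    destruct (continuous_eps_delta (P j) t (HP j t ltac:(lia)) eps Heps) as [d [Hd Hcd]].
    exists d. split; [exact Hd|]. intros t' Ht' Hdt.
    rewrite !(HG j) by (lia || lra). now apply Hcd.
Qed.

Lemma piecewise_smooth_cont c : piecewise_smooth c ->
  cont_on_interval (cx c) 0 1 /\ cont_on_interval (cy c) 0 1 /\ cont_on_interval (cz c) 0 1.
Proof.
  intros [Hp0 [Hp1 [Hinc [Hsm Hagree]]]]. rewrite <- Hp0, <- Hp1.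
  split; [|split].
  - apply cont_on_interval_piecewise with (px c); auto.
    + intros k t Hk. apply smooth_continuous, (Hsm k Hk).
    + intros k t Hk Ht. apply (Hagree k t Hk Ht).
  - apply cont_on_interval_piecewise with (py c); auto.
    + intros k t Hk. apply smooth_continuous, (Hsm k Hk).
    + intros k t Hk Ht. apply (Hagree k t Hk Ht).
  - apply cont_on_interval_piecewise with (pz c); auto.
    + intros k t Hk. apply smooth_continuous, (Hsm k Hk).
    + intros k t Hk Ht. apply (Hagree k t Hk Ht).
Qed.

Definition cont_on_sq_at (X : R * R -> R) (p : R * R) : Prop :=
  forall eps, 0 < eps -> exists del, 0 < del /\
    forall q, in_sq q -> Rabs (fst q - fst p) < del -> Rabs (snd q - snd p) < del ->
    Rabs (X q - X p) < eps.

Lemma cont_on_sq_of_components u :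
  (forall p, in_sq p -> cont_on_sq_at (fun q => fst (u q)) p /\
                        cont_on_sq_at (fun q => snd (u q)) p) ->
  cont_on_sq u.
Proof.
  intros Hu p Hp. apply filterlim_locally. intros eps.
  destruct (Hu p Hp) as [H1 H2].
  destruct (H1 eps (cond_pos eps)) as [d1 [Hd1 Hc1]].
  destruct (H2 eps (cond_pos eps)) as [d2 [Hd2 Hc2]].
  exists (mkposreal _ (Rmin_pos _ _ Hd1 Hd2)). intros q [Hq1 Hq2] Hq.
  change (Rabs (fst q - fst p) < Rmin d1 d2) in Hq1.
  change (Rabs (snd q - snd p) < Rmin d1 d2) in Hq2.
  pose proof (Rmin_l d1 d2) as Hmin1. pose proof (Rmin_r d1 d2) as Hmin2.
  split.
  - apply Hc1; [exact Hq|exact (Rlt_le_trans _ _ _ Hq1 Hmin1)|exact (Rlt_le_trans _ _ _ Hq2 Hmin1)].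
  - apply Hc2; [exact Hq|exact (Rlt_le_trans _ _ _ Hq1 Hmin2)|exact (Rlt_le_trans _ _ _ Hq2 Hmin2)].
Qed.


Lemma cont_on_sq_at_comp (h : R -> R) X p :
  (forall y, continuous h y) -> cont_on_sq_at X p -> cont_on_sq_at (fun q => h (X q)) p.
Proof.
  intros Hh HX eps Heps.
  destruct (continuous_eps_delta h (X p) (Hh _) eps Heps) as [d [Hd Hcont]].
  destruct (HX d Hd) as [d' [Hd' HXd]]. exists d'. split; auto.
Qed.

Definition straight_homotopy (G : R -> R) (q : R * R) : R :=
  (1 - snd q) * G (fst q) + snd q * G 0.

Lemma straight_homotopy_cont G p : cont_on_interval G 0 1 -> in_sq p ->
  cont_on_sq_at (straight_homotopy G) p.
Proof.
  intros HG [[Ht0 Ht1] [Hs0 Hs1]] eps Heps. destruct p as [t s]. simpl in *.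
  set (K := Rabs (G t) + Rabs (G 0)).
  assert (HK : Rabs (G 0 - G t) <= K).
  { unfold K, Rminus. eapply Rle_trans; [apply Rabs_triang|]. rewrite Rabs_Ropp. lra. }
  assert (HK0 : 0 <= K) by (pose proof (Rabs_pos (G 0 - G t)); lra).
  destruct (HG t ltac:(lra) (eps / 2) ltac:(lra)) as [d [Hd Hcont]].
  exists (Rmin d (eps / (2 * (1 + K)))).
  split; [apply Rmin_pos; [lra|apply Rdiv_lt_0_compat; lra]|].
  intros [t' s'] [[Ht'0 Ht'1] [Hs'0 Hs'1]] Hdt Hds. unfold straight_homotopy. simpl in *.
  pose proof (Rmin_l d (eps / (2 * (1 + K)))). pose proof (Rmin_r d (eps / (2 * (1 + K)))).
  assert (HGt : Rabs (G t' - G t) < eps / 2) by (apply Hcont; lra).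
  assert (Hsmall : Rabs (s' - s) * (1 + K) < eps / 2).
  { replace (eps / 2) with (eps / (2 * (1 + K)) * (1 + K)) by (field; lra).
    apply Rmult_lt_compat_r; lra. }
  replace ((1 - s') * G t' + s' * G 0 - ((1 - s) * G t + s * G 0)) with
    ((1 - s') * (G t' - G t) + (s' - s) * (G 0 - G t)) by ring.
  eapply Rle_lt_trans; [apply Rabs_triang|]. rewrite !Rabs_mult, (Rabs_pos_eq (1 - s')) by lra.
  pose proof (Rabs_pos (s' - s)). pose proof (Rabs_pos (G t' - G t)).
  assert (Rabs (s' - s) * Rabs (G 0 - G t) <= Rabs (s' - s) * K)
    by (apply Rmult_le_compat_l; auto).
  nra.
Qed.

Lemma circ_on_circle L x : on_circle (circ L x).
Proof.
  unfold on_circle, circ; simpl. pose proof (sin2_cos2 (2 * PI * x / L)).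
  unfold Rsqr in *. lra.
Qed.

Lemma circ_straight_homotopy_cont L G : cont_on_interval G 0 1 ->
  cont_on_sq (fun q => circ L (straight_homotopy G q)).
Proof.
  intros HG. apply cont_on_sq_of_components. intros p Hp. unfold circ; simpl.
  assert (Hlin : forall y, continuous (fun x => 2 * PI * x / L) y).
  { intro y. repeat apply continuous_mult_R; apply continuous_id || apply continuous_const. }
  split; apply (cont_on_sq_at_comp (fun x => _ (2 * PI * x / L)));
    try (now apply straight_homotopy_cont); intro y;
    [apply continuous_cos_comp|apply continuous_sin_comp]; apply Hlin.
Qed.

Lemma contractible_of_closed_lift a c : piecewise_smooth c ->
  cx c 1 = cx c 0 -> cy c 1 = cy c 0 -> cz c 1 = cz c 0 -> contractible_in_T a c.
Proof.
  intros Hc Hx Hy Hz. destruct (piecewise_smooth_cont c Hc) as [HX [HY HZ]].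
  exists (fun q => circ (4 * a) (straight_homotopy (cx c) q)),
         (fun q => circ (4 * a) (straight_homotopy (cy c) q)),
         (fun q => circ (2 * PI) (straight_homotopy (cz c) q)).
  split; [now apply circ_straight_homotopy_cont|].
  split; [now apply circ_straight_homotopy_cont|].
  split; [now apply circ_straight_homotopy_cont|].
  unfold straight_homotopy; simpl. split; [|split; [|split]].
  - intros p _. repeat split; apply circ_on_circle.
  - intros t _. repeat split; f_equal; ring.
  - exists (circ (4 * a) (cx c 0)), (circ (4 * a) (cy c 0)), (circ (2 * PI) (cz c 0)).
    intros t _. repeat split; f_equal; ring.
  - intros s _. rewrite Hx, Hy, Hz. repeat split; f_equal; ring.
Qed.

Lemma IZR_abs_ge_1 (m : Z) : m <> 0%Z -> 1 <= Rabs (IZR m).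
Proof.
  intros Hm. rewrite <- abs_IZR. apply IZR_le. lia.
Qed.

Lemma noncontractible_length_ge a c : 0 < a -> a * sqrt 2 < PI / 2 ->
  piecewise_smooth c -> closed_in_T a c -> ~ contractible_in_T a c ->
  Rmin (4 * a) (2 * PI * cos (a * sqrt 2)) <= h_length a c.
Proof.
  intros ha ha2 Hc [m [n [k [Hm [Hn Hk]]]]] Hnc.
  pose proof (Rmin_l (4 * a) (2 * PI * cos (a * sqrt 2))).
  pose proof (Rmin_r (4 * a) (2 * PI * cos (a * sqrt 2))).
  destruct (cos_lattice_dist_ge a 0 0 ha ha2) as [Hcos _]. pose proof PI_RGT_0.
  destruct (Z.eq_dec m 0) as [->|Hm0].
  2:{ pose proof (displacement_x_le_length a c Hc) as Hlen. pose proof (IZR_abs_ge_1 m Hm0).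
      rewrite Hm, Rabs_mult, (Rabs_pos_eq (4 * a)) in Hlen by lra. nra. }
  destruct (Z.eq_dec n 0) as [->|Hn0].
  2:{ pose proof (displacement_y_le_length a c Hc) as Hlen. pose proof (IZR_abs_ge_1 n Hn0).
      rewrite Hn, Rabs_mult, (Rabs_pos_eq (4 * a)) in Hlen by lra. nra. }
  destruct (Z.eq_dec k 0) as [->|Hk0].
  2:{ pose proof (displacement_z_le_length a c ha ha2 Hc) as Hlen. pose proof (IZR_abs_ge_1 k Hk0).
      rewrite Hk, Rabs_mult, (Rabs_pos_eq (2 * PI)) in Hlen by lra.
      assert (0 <= 2 * PI * cos (a * sqrt 2) * (Rabs (IZR k) - 1))
        by (apply Rmult_le_pos; nra).
      nra. }
  change (IZR 0) with 0 in Hm, Hn, Hk.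
  exfalso. apply Hnc, contractible_of_closed_lift; auto; lra.
Qed.

(** * A loop winding once around a circle is not null-homotopic *)


Definition cross (p q : R * R) : R := fst p * snd q - snd p * fst q.
Definition dot (p q : R * R) : R := fst p * fst q + snd p * snd q.

(* For unit vectors making an angle less than pi/2, the oriented angle from p to q. *)
Definition angle (p q : R * R) : R := atan (cross p q / dot p q).

Definition near (p q : R * R) : Prop := on_circle p /\ on_circle q /\
  Rabs (fst p - fst q) < 1 / 4 /\ Rabs (snd p - snd q) < 1 / 4.

Lemma cross_sq_plus_dot_sq p q : on_circle p -> on_circle q ->
  cross p q ^ 2 + dot p q ^ 2 = 1.
Proof.
  destruct p as [p1 p2], q as [q1 q2]. unfold on_circle, cross, dot; cbn [fst snd]. intros Hp Hq.
  transitivity ((p1 ^ 2 + p2 ^ 2) * (q1 ^ 2 + q2 ^ 2)); [ring|]. rewrite Hp, Hq. ring.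
Qed.

Lemma near_dot_pos p q : near p q -> 15 / 16 < dot p q.
Proof.
  destruct p as [p1 p2], q as [q1 q2]. unfold near, on_circle, dot; cbn [fst snd].
  intros [Hp [Hq [H1 H2]]].
  rewrite <- (Rabs_pos_eq (1 / 4)) in H1, H2 by lra.
  apply Rsqr_lt_abs_1 in H1. apply Rsqr_lt_abs_1 in H2. unfold Rsqr in *. nra.
Qed.

Lemma near_slope_lt_1 p q : near p q -> Rabs (cross p q / dot p q) < 1.
Proof.
  intros Hpq. pose proof (near_dot_pos p q Hpq) as Hdot.
  destruct Hpq as [Hp [Hq _]]. pose proof (cross_sq_plus_dot_sq p q Hp Hq) as Hsum.
  rewrite Rabs_div, (Rabs_pos_eq (dot p q)) by lra.
  apply Rlt_div_l; [lra|]. rewrite Rmult_1_l.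
  apply Rabs_def1; nra.
Qed.

Lemma atan_lt_PI4 x : Rabs x < 1 -> - (PI / 4) < atan x < PI / 4.
Proof.
  intros Hx. apply Rabs_def2 in Hx. rewrite <- atan_1, <- atan_opp.
  split; apply atan_increasing; lra.
Qed.

Lemma atan_add x y : Rabs x < 1 -> Rabs y < 1 ->
  atan x + atan y = atan ((x + y) / (1 - x * y)).
Proof.
  intros Hx Hy. pose proof (atan_lt_PI4 x Hx). pose proof (atan_lt_PI4 y Hy).
  pose proof PI_RGT_0. apply Rabs_def2 in Hx. apply Rabs_def2 in Hy.
  rewrite <- (atan_tan (atan x + atan y)) by lra. f_equal.
  rewrite tan_plus, !tan_atan; try reflexivity;
    try (apply Rgt_not_eq, cos_gt_0; lra).
  rewrite !tan_atan. nra.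
Qed.

Lemma dot_through_unit p q r : on_circle q ->
  dot p r = dot p q * dot q r - cross p q * cross q r.
Proof.
  destruct p as [p1 p2], q as [q1 q2], r as [r1 r2]. unfold on_circle, dot, cross; cbn [fst snd].
  intros Hq. transitivity ((p1 * r1 + p2 * r2) * (q1 ^ 2 + q2 ^ 2)); [rewrite Hq|]; ring.
Qed.

Lemma cross_through_unit p q r : on_circle q ->
  cross p r = cross p q * dot q r + dot p q * cross q r.
Proof.
  destruct p as [p1 p2], q as [q1 q2], r as [r1 r2]. unfold on_circle, dot, cross; cbn [fst snd].
  intros Hq. transitivity ((p1 * r2 - p2 * r1) * (q1 ^ 2 + q2 ^ 2)); [rewrite Hq|]; ring.
Qed.

Lemma angle_add p q r : near p q -> near q r -> near p r ->
  angle p q + angle q r = angle p r.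
Proof.
  intros Hpq Hqr Hpr.
  pose proof (near_dot_pos p q Hpq). pose proof (near_dot_pos q r Hqr).
  pose proof (near_dot_pos p r Hpr).
  unfold angle. rewrite atan_add by now apply near_slope_lt_1.
  destruct Hpq as [_ [Hq _]].
  rewrite (dot_through_unit p q r Hq), (cross_through_unit p q r Hq) in *.
  f_equal. field. split; [|split]; lra.
Qed.

Lemma angle_self p : angle p p = 0.
Proof.
  unfold angle, cross. replace (fst p * snd p - snd p * fst p) with 0 by ring.
  unfold Rdiv. rewrite Rmult_0_l. apply atan_0.
Qed.

Lemma angle_unit_vectors al be : - (PI / 2) < be - al < PI / 2 ->
  angle (cos al, sin al) (cos be, sin be) = be - al.
Proof.
  intros H. unfold angle, cross, dot; simpl.
  replace (cos al * sin be - sin al * cos be) with (sin (be - al)) by (rewrite sin_minus; ring).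
  replace (cos al * cos be + sin al * sin be) with (cos (be - al)) by (rewrite cos_minus; ring).
  now apply atan_tan.
Qed.

Lemma lsum_ext (A B : nat -> R) n :
  (forall i, (i < n)%nat -> A i = B i) -> lsum A n = lsum B n.
Proof. induction n as [|n IH]; intros H; simpl; [reflexivity|]. rewrite IH, H; auto; lia. Qed.

Lemma lsum_const (c : R) n : lsum (fun _ => c) n = INR n * c.
Proof. induction n as [|n IH]; simpl lsum; [simpl; ring|]. rewrite IH, S_INR. ring. Qed.

Lemma lsum_telescope (A B C : nat -> R) n :
  (forall i, (i < n)%nat -> A i - B i = C i - C (S i)) ->
  lsum A n - lsum B n = C 0%nat - C n.
Proof.
  induction n as [|n IH]; intros H; simpl; [ring|].
  pose proof (H n (Nat.lt_succ_diag_r n)).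
  enough (lsum A n - lsum B n = C 0%nat - C n) by lra.
  apply IH. intros. apply H. lia.
Qed.

Definition winding (g : nat -> R * R) (N : nat) : R :=
  lsum (fun i => angle (g i) (g (S i))) N.

Lemma winding_ext g g' N : (forall i, (i <= N)%nat -> g i = g' i) ->
  winding g N = winding g' N.
Proof. intros H. apply lsum_ext. intros i Hi. rewrite !H by lia. reflexivity. Qed.

Lemma winding_const q N : winding (fun _ => q) N = 0.
Proof. unfold winding. rewrite angle_self, lsum_const. ring. Qed.

Lemma winding_circle N : 4 < INR N ->
  winding (fun i => (cos (2 * PI * (INR i / INR N)), sin (2 * PI * (INR i / INR N)))) N = 2 * PI.
Proof.
  intros HN. pose proof PI_RGT_0. unfold winding.
  rewrite (lsum_ext _ (fun _ => 2 * PI / INR N)), lsum_const; [field; lra|].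
  intros i _. rewrite angle_unit_vectors; rewrite S_INR.
  - field. lra.
  - replace (2 * PI * ((INR i + 1) / INR N) - 2 * PI * (INR i / INR N))
      with (2 * PI / INR N) by (field; lra).
    split; [apply Rlt_trans with 0; [lra|apply Rdiv_lt_0_compat; lra]|].
    apply Rlt_div_l; [lra|]. nra.
Qed.

(* The angle sums along consecutive rows of a fine grid differ by the angle
   sums along the two side columns, which cancel for a periodic grid. *)
Lemma winding_grid_invariant (g : nat -> nat -> R * R) N :
  (forall i i' j j', (i <= i' <= S i)%nat -> (j <= j' <= S j)%nat ->
     (i' <= N)%nat -> (j' <= N)%nat -> near (g i j) (g i' j')) ->
  (forall j, (j <= N)%nat -> g 0%nat j = g N j) ->
  winding (fun i => g i 0%nat) N = winding (fun i => g i N) N.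
Proof.
  intros Hnear Hper.
  assert (Hrow : forall j, (j < N)%nat ->
            winding (fun i => g i j) N = winding (fun i => g i (S j)) N).
  { intros j Hj.
    enough (winding (fun i => g i j) N - winding (fun i => g i (S j)) N = 0) by lra.
    unfold winding.
    rewrite (lsum_telescope _ _ (fun i => angle (g i j) (g i (S j)))).
    - rewrite Hper, (Hper (S j)) by lia. ring.
    - intros i Hi.
      pose proof (angle_add (g i j) (g (S i) j) (g (S i) (S j))
                    ltac:(apply Hnear; lia) ltac:(apply Hnear; lia) ltac:(apply Hnear; lia)).
      pose proof (angle_add (g i j) (g i (S j)) (g (S i) (S j))
                    ltac:(apply Hnear; lia) ltac:(apply Hnear; lia) ltac:(apply Hnear; lia)).
      lra. }
  assert (Hall : forall j, (j <= N)%nat ->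
            winding (fun i => g i 0%nat) N = winding (fun i => g i j) N).
  { induction j as [|j IH]; intros Hj; [reflexivity|]. rewrite IH by lia. apply Hrow. lia. }
  apply Hall. lia.
Qed.

Definition clamp01 (x : R) : R := Rmax 0 (Rmin 1 x).

Lemma clamp01_in x : 0 <= clamp01 x <= 1.
Proof. unfold clamp01, Rmax, Rmin. repeat destruct Rle_dec; lra. Qed.

Lemma clamp01_id x : 0 <= x <= 1 -> clamp01 x = x.
Proof. unfold clamp01, Rmax, Rmin. repeat destruct Rle_dec; lra. Qed.

Lemma clamp01_lipschitz x y : Rabs (clamp01 x - clamp01 y) <= Rabs (x - y).
Proof.
  unfold clamp01, Rmax, Rmin. repeat destruct Rle_dec; unfold Rabs; repeat destruct Rcase_abs; lra.
Qed.

Lemma cont_on_sq_clamped u x y : cont_on_sq u ->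
  continuity_2d_pt (fun x y => fst (u (clamp01 x, clamp01 y))) x y /\
  continuity_2d_pt (fun x y => snd (u (clamp01 x, clamp01 y))) x y.
Proof.
  intros Hu. set (p := (clamp01 x, clamp01 y)).
  assert (Hp : in_sq p) by (split; apply clamp01_in).
  assert (Hball : forall eps : posreal, exists d : posreal, forall x' y',
    Rabs (x' - x) < d -> Rabs (y' - y) < d ->
    Rabs (fst (u (clamp01 x', clamp01 y')) - fst (u p)) < eps /\
    Rabs (snd (u (clamp01 x', clamp01 y')) - snd (u p)) < eps).
  { intros eps. destruct (proj1 (filterlim_locally _ _) (Hu p Hp) eps) as [d Hd].
    exists d. intros x' y' Hx Hy.
    assert (Hq : in_sq (clamp01 x', clamp01 y')) by (split; apply clamp01_in).
    destruct (Hd (clamp01 x', clamp01 y')) as [H1 H2]; [|exact Hq|split; assumption].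
    split; [apply (Rle_lt_trans _ _ _ (clamp01_lipschitz x' x) Hx)
           |apply (Rle_lt_trans _ _ _ (clamp01_lipschitz y' y) Hy)]. }
  split; intros eps; destruct (Hball eps) as [d Hd]; exists d; intros x' y' Hx Hy;
    apply (Hd x' y' Hx Hy).
Qed.

Lemma cont_on_sq_uniform u : cont_on_sq u -> forall eps, 0 < eps ->
  exists d, 0 < d /\ forall p q, in_sq p -> in_sq q ->
    Rabs (fst q - fst p) < d -> Rabs (snd q - snd p) < d ->
    Rabs (fst (u q) - fst (u p)) < eps /\ Rabs (snd (u q) - snd (u p)) < eps.
Proof.
  intros Hu eps Heps.
  destruct (uniform_continuity_2d (fun x y => fst (u (clamp01 x, clamp01 y))) 0 1 0 1
    (fun x y _ _ => proj1 (cont_on_sq_clamped u x y Hu)) (mkposreal eps Heps)) as [d1 Hd1].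
  destruct (uniform_continuity_2d (fun x y => snd (u (clamp01 x, clamp01 y))) 0 1 0 1
    (fun x y _ _ => proj2 (cont_on_sq_clamped u x y Hu)) (mkposreal eps Heps)) as [d2 Hd2].
  exists (Rmin d1 d2). split; [apply Rmin_pos; apply cond_pos|].
  intros [p1 p2] [q1 q2] [Hp1 Hp2] [Hq1 Hq2] Hd Hd'. simpl in *.
  pose proof (Rmin_l d1 d2). pose proof (Rmin_r d1 d2).
  specialize (Hd1 p1 p2 q1 q2 Hp1 Hp2 Hq1 Hq2 ltac:(lra) ltac:(lra)).
  specialize (Hd2 p1 p2 q1 q2 Hp1 Hp2 Hq1 Hq2 ltac:(lra) ltac:(lra)).
  rewrite !clamp01_id in Hd1, Hd2 by assumption. split; assumption.
Qed.

Lemma exists_fine_grid d : 0 < d -> exists N : nat, 4 < INR N /\ 1 / INR N < d.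
Proof.
  intros Hd. destruct (INR_unbounded (Rmax (1 / d) 4)) as [N HN].
  pose proof (Rmax_l (1 / d) 4). pose proof (Rmax_r (1 / d) 4).
  exists N. split; [lra|].
  assert (HdN : 1 < d * INR N).
  { replace 1 with (d * (1 / d)) by (field; lra). apply Rmult_lt_compat_l; lra. }
  apply (Rmult_lt_reg_r (INR N)); [lra|].
  replace (1 / INR N * INR N) with 1 by (field; lra). lra.
Qed.

Lemma grid_step_le (N i i' : nat) : 0 < INR N -> (i <= i' <= S i)%nat ->
  Rabs (INR i' / INR N - INR i / INR N) <= 1 / INR N.
Proof.
  intros HN Hi. destruct (Nat.eq_dec i' i) as [->|Hne].
  - rewrite Rminus_diag, Rabs_R0. apply Rlt_le, Rdiv_lt_0_compat; lra.
  - replace i' with (S i) by lia. rewrite S_INR.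
    replace ((INR i + 1) / INR N - INR i / INR N) with (1 / INR N) by (field; lra).
    apply Req_le, Rabs_pos_eq, Rlt_le, Rdiv_lt_0_compat; lra.
Qed.

Lemma grid_point_in (N i : nat) : 0 < INR N -> (i <= N)%nat -> 0 <= INR i / INR N <= 1.
Proof.
  intros HN Hi. apply le_INR in Hi. pose proof (pos_INR i).
  split; [apply Rdiv_le_0_compat; lra|].
  apply (Rmult_le_reg_r (INR N)); [lra|].
  replace (INR i / INR N * INR N) with (INR i) by (field; lra). lra.
Qed.

Lemma loop_not_null_homotopic u q0 : cont_on_sq u ->
  (forall p, in_sq p -> on_circle (u p)) ->
  (forall t, 0 <= t <= 1 -> u (t, 0) = (cos (2 * PI * t), sin (2 * PI * t))) ->
  (forall t, 0 <= t <= 1 -> u (t, 1) = q0) ->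
  (forall s, 0 <= s <= 1 -> u (0, s) = u (1, s)) -> False.
Proof.
  intros Hu Hcirc Hbot Htop Hper.
  destruct (cont_on_sq_uniform u Hu (1 / 4) ltac:(lra)) as [d [Hd Hunif]].
  destruct (exists_fine_grid d Hd) as [N [HN HNd]].
  set (g := fun i j : nat => u (INR i / INR N, INR j / INR N)).
  assert (Hin : forall i, (i <= N)%nat -> 0 <= INR i / INR N <= 1)
    by (intros; apply grid_point_in; auto; lra).
  assert (Hwind := winding_grid_invariant g N).
  rewrite (winding_ext (fun i => g i 0%nat) _ N) in Hwind
    by (intros i Hi; unfold g; rewrite Rdiv_0_l; apply Hbot, Hin, Hi).
  rewrite (winding_ext (fun i => g i N) (fun _ => q0) N) in Hwind
    by (intros i Hi; unfold g; rewrite Rdiv_diag by lra; apply Htop, Hin, Hi).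
  rewrite winding_circle, winding_const in Hwind by assumption.
  pose proof PI_RGT_0. enough (2 * PI = 0) by lra. apply Hwind.
  - intros i i' j j' Hi Hj Hi' Hj'.
    assert (Hp : in_sq (INR i / INR N, INR j / INR N)) by (split; apply Hin; lia).
    assert (Hq : in_sq (INR i' / INR N, INR j' / INR N)) by (split; apply Hin; lia).
    pose proof (grid_step_le N i i' ltac:(lra) Hi). pose proof (grid_step_le N j j' ltac:(lra) Hj).
    destruct (Hunif _ _ Hp Hq) as [Hu1 Hu2]; simpl; try lra.
    unfold g. repeat split; try apply Hcirc; auto.
    + rewrite Rabs_minus_sym. exact Hu1.
    + rewrite Rabs_minus_sym. exact Hu2.
  - intros j Hj. unfold g. rewrite Rdiv_0_l, Rdiv_diag by lra. apply Hper, Hin, Hj.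
Qed.

(** * Two short non-contractible loops *)

Lemma not_contractible_of_x_turn a c : 0 < a ->
  (forall t, 0 <= t <= 1 -> cx c t = 4 * a * t) -> ~ contractible_in_T a c.
Proof.
  intros ha Hx [u1 [u2 [u3 [Hu1 [_ [_ [Hcirc [Hbot [[q1 [q2 [q3 Htop]]] Hper]]]]]]]]].
  apply (loop_not_null_homotopic u1 q1 Hu1).
  - intros p Hp. apply (Hcirc p Hp).
  - intros t Ht. rewrite (proj1 (Hbot t Ht)), Hx by exact Ht. unfold circ.
    do 2 f_equal; field; lra.
  - intros t Ht. apply (Htop t Ht).
  - intros s Hs. apply (Hper s Hs).
Qed.

Lemma not_contractible_of_z_turn a c :
  (forall t, 0 <= t <= 1 -> cz c t = 2 * PI * t) -> ~ contractible_in_T a c.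
Proof.
  intros Hz [u1 [u2 [u3 [_ [_ [Hu3 [Hcirc [Hbot [[q1 [q2 [q3 Htop]]] Hper]]]]]]]]].
  pose proof PI_RGT_0.
  apply (loop_not_null_homotopic u3 q3 Hu3).
  - intros p Hp. apply (Hcirc p Hp).
  - intros t Ht. rewrite (proj2 (proj2 (Hbot t Ht))), Hz by exact Ht. unfold circ.
    do 2 f_equal; field; lra.
  - intros t Ht. apply (Htop t Ht).
  - intros s Hs. apply (Hper s Hs).
Qed.

Definition affine (al be t : R) : R := al * t + be.

Lemma is_derive_affine al be t : is_derive (affine al be) t al.
Proof. unfold affine. auto_derive; auto; ring. Qed.

Lemma smooth_affine al be : smooth (affine al be).
Proof.
  assert (Haff : forall k, exists al' be', forall t, Derive_n (affine al be) k t = affine al' be' t).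
  { induction k as [|k [al' [be' IH]]]; [now exists al, be|].
    exists 0, al'. intro t. simpl.
    rewrite (Derive_ext _ _ t IH), (is_derive_unique _ _ _ (is_derive_affine al' be' t)).
    unfold affine. ring. }
  intros k t. destruct (Haff k) as [al' [be' Hk]].
  exists al'. apply (is_derive_ext (affine al' be')); [intro; now rewrite Hk|].
  apply is_derive_affine.
Qed.

(* [part := INR] gives the single piece [0, 1]. *)
Definition segment (X Y Z : R -> R) : curve3 :=
  {| cx := X; cy := Y; cz := Z; npieces := 1; part := INR;
     px := fun _ => X; py := fun _ => Y; pz := fun _ => Z |}.

Lemma segment_piecewise_smooth al1 be1 al2 be2 al3 be3 :
  piecewise_smooth (segment (affine al1 be1) (affine al2 be2) (affine al3 be3)).
Proof.
  repeat split; simpl; auto using smooth_affine.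
  intros k Hk. replace k with 0%nat by lia. simpl. lra.
Qed.

Lemma h_length_segment a al1 be1 al2 be2 al3 be3 v :
  (forall t, h_norm a (affine al1 be1 t) (affine al2 be2 t) al1 al2 al3 = v) ->
  h_length a (segment (affine al1 be1) (affine al2 be2) (affine al3 be3)) = v.
Proof.
  intros Hv. unfold h_length; simpl.
  rewrite (RInt_ext _ (fun _ => v)), RInt_const.
  - unfold scal; simpl; unfold mult; simpl. ring.
  - intros t _. now rewrite !(is_derive_unique _ _ _ (is_derive_affine _ _ t)).
Qed.

Definition noncontractible_loop_of_length (a L : R) : Prop := exists c,
  piecewise_smooth c /\ closed_in_T a c /\ ~ contractible_in_T a c /\ L = h_length a c.

Lemma horizontal_loop a : 0 < a -> noncontractible_loop_of_length a (4 * a).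
Proof.
  intros ha. exists (segment (affine (4 * a) 0) (affine 0 0) (affine 0 0)).
  split; [apply segment_piecewise_smooth|]. split.
  { exists 1%Z, 0%Z, 0%Z. unfold affine; simpl. repeat split; ring. }
  split.
  { apply not_contractible_of_x_turn; auto. intros t _. unfold affine; simpl; ring. }
  symmetry. apply h_length_segment. intro t. unfold h_norm.
  replace ((4 * a) ^ 2 + 0 ^ 2 + _ ^ 2 * 0 ^ 2) with ((4 * a) ^ 2) by ring.
  apply sqrt_pow2. lra.
Qed.

Lemma vertical_loop a : 0 < a -> a * sqrt 2 < PI / 2 ->
  noncontractible_loop_of_length a (2 * PI * cos (a * sqrt 2)).
Proof.
  intros ha ha2. pose proof PI_RGT_0.
  destruct (cos_lattice_dist_ge a 0 0 ha ha2) as [Hcos _].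
  exists (segment (affine 0 a) (affine 0 a) (affine (2 * PI) 0)).
  split; [apply segment_piecewise_smooth|]. split.
  { exists 0%Z, 0%Z, 1%Z. unfold affine; simpl. repeat split; ring. }
  split.
  { apply not_contractible_of_z_turn. intros t _. unfold affine; simpl; ring. }
  symmetry. apply h_length_segment. intro t. unfold h_norm, affine.
  replace (0 * t + a) with a by ring. rewrite lattice_dist_center by exact ha.
  replace (0 ^ 2 + 0 ^ 2 + cos (a * sqrt 2) ^ 2 * (2 * PI) ^ 2)
    with ((2 * PI * cos (a * sqrt 2)) ^ 2) by ring.
  apply sqrt_pow2. nra.
Qed.

Theorem mainTheorem2 (a : R) (ha : 0 < a) (ha2 : a * sqrt 2 < PI / 2) :
  systole a = Finite (Rmin (4 * a) (2 * PI * cos (a * sqrt 2))).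
Proof.
  unfold systole. apply is_glb_Rbar_unique. split.
  - intros L [c [Hc [Hclosed [Hnc ->]]]]. simpl.
    now apply noncontractible_length_ge.
  - intros b Hb. apply Hb. unfold Rmin.
    destruct (Rle_dec (4 * a) (2 * PI * cos (a * sqrt 2))).
    + now apply horizontal_loop.
    + now apply vertical_loop.
Qed.
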